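(* Let $\Sigma=\mathbb{S}^{n-1}\times\mathbb{R}\subset\mathbb{R}^{n+1}$ be a self-shrinker, with $x_n$ the coordinate on the $\mathbb{R}$ factor. For each $a\in[0,\sqrt2)$, the region $\{x_n>a\}\subset\Sigma$ is unstable. Moreover, for each such $a$ there exists $b_a>a$ such that the region $\{a<x_n<b\}\subset\Sigma$ is unstable for every $b>b_a$.
   Context: $\mathbb{S}^{n-1}$ is the round sphere of radius $\sqrt{2(n-1)}$ centered at the origin of $\mathbb{R}^n$. Stability operator: $Lf=\Delta f-\tfrac12\langle\vec x,\nabla f\rangle+(|A|^2+\tfrac12)f$. A region $\Omega$ is stable if there exists a function $u$ with $Lu=0$ and $u>0$ on $\Omega$; it is unstable otherwise. For a bounded region, instability means $L$ has a negative Dirichlet eigenvalue there (eigenvalue convention $Lu=-\lambda u$). *)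

From Stdlib Require Import Reals Lra Arith.
Open Scope R_scope.

(* Points of R^{n+1} are represented as functions  x : nat -> R  with
   coordinates x 0, ..., x n ; coordinates of index > n are required to be 0
   (predicate [valid]).  The cylinder is
     Sigma = S^{n-1} x R,  S^{n-1} = sphere of radius sqrt(2(n-1)) in the
   coordinates x 0 .. x (n-1), and x n is the coordinate on the R factor. *)

Fixpoint rsum (N : nat) (f : nat -> R) : R :=
  match N with
  | O => 0
  | S k => rsum k f + f k
  end.

Definition valid (N : nat) (x : nat -> R) : Prop :=
  forall i, (N <= i)%nat -> x i = 0.

Definition dist (N : nat) (x z : nat -> R) : R :=
  sqrt (rsum N (fun i => (x i - z i) ^ 2)).

Definition rad (n : nat) : R := sqrt (2 * (INR n - 1)).

Definition on_cyl (n : nat) (x : nat -> R) : Prop :=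
  valid (S n) x /\ rsum n (fun i => x i ^ 2) = rad n ^ 2.

Definition upd (x : nat -> R) (i : nat) (s : R) : nat -> R :=
  fun j => if Nat.eqb j i then s else x j.

Definition has_partial (F : (nat -> R) -> R) (i : nat)
    (G : (nat -> R) -> R) (x : nat -> R) : Prop :=
  derivable_pt_lim (fun s => F (upd x i s)) (x i) (G x).

Definition cont_at (N : nat) (G : (nat -> R) -> R) (z : nat -> R) : Prop :=
  forall eps, 0 < eps -> exists d, 0 < d /\
    forall w, valid N w -> dist N w z < d -> Rabs (G w - G z) < eps.

Definition C2_ball (N : nat) (F : (nat -> R) -> R)
    (G : nat -> (nat -> R) -> R) (H : nat -> nat -> (nat -> R) -> R)
    (x : nat -> R) (r : R) : Prop :=
  0 < r /\
  forall z, valid N z -> dist N z x < r ->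
    forall i j, (i < N)%nat -> (j < N)%nat ->
      has_partial F i (G i) z /\ has_partial (G i) j (H i j) z /\
      cont_at N (H i j) z.

(* Extension of a function u on Sigma to a neighbourhood of Sigma in R^{n+1},
   homogeneous of degree 0 in the sphere variables:
     hext u (y, t) = u (rad * y / |y| , t).
   Only the values of u on Sigma matter. *)
Definition hext (n : nat) (u : (nat -> R) -> R) : (nat -> R) -> R :=
  fun x => u (fun i =>
     if Nat.ltb i n then rad n * x i / sqrt (rsum n (fun k => x k ^ 2))
     else if Nat.eqb i n then x n else 0).

(* Squared norm of the second fundamental form of Sigma:
   n-1 principal curvatures equal to 1/rad, so |A|^2 = (n-1)/(2(n-1)) = 1/2. *)
Definition cylA2 : R := / 2.

(* The stability operator  L f = Delta f - 1/2 <x, grad f> + (|A|^2 + 1/2) f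
   on Sigma, evaluated at a point x of Sigma, for f = u|Sigma, computed from the
   degree-0-homogeneous extension F = hext n u (with partials G, H):
   at points of Sigma, Delta_Sigma u = sum_{i<=n} d_i d_i F  and
   grad_Sigma u = grad F (F is 0-homogeneous in the sphere variables). *)
Definition Lop (n : nat) (F : (nat -> R) -> R)
    (G : nat -> (nat -> R) -> R) (H : nat -> nat -> (nat -> R) -> R)
    (x : nat -> R) : R :=
  rsum (S n) (fun i => H i i x)
  - / 2 * rsum (S n) (fun i => x i * G i x)
  + (cylA2 + / 2) * F x.

(* A region of Sigma is given by an (open) predicate on R^{n+1}; the region is
   its intersection with Sigma. *)
Definition stable (n : nat) (Omega : (nat -> R) -> Prop) : Prop :=
  exists u : (nat -> R) -> R,
    forall x, on_cyl n x -> Omega x ->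
      exists G H r,
        C2_ball (S n) (hext n u) G H x r /\
        Lop n (hext n u) G H x = 0 /\
        0 < u x.

Definition unstable (n : nat) (Omega : (nat -> R) -> Prop) : Prop :=
  ~ stable n Omega.

From Pilot Require Import Defs.
From Stdlib Require Import Reals Lra Lia Psatz ClassicalEpsilon FunctionalExtensionality.
From Coquelicot Require Import Coquelicot.
(* Re-import so that [Defs.dist] is not shadowed by Coquelicot's [dist]. *)
Import Defs.
Open Scope R_scope.

(* Suppose [u > 0] with [L u = 0] on the slab [K = {c <= x_n <= D}] of the
   cylinder, and let [phi(t) = (t^2 - c^2)(D - t)], which vanishes at [t = c, D].
   Let [M] be the maximum of [phi(x_n) / u] over the compact set [K], attained at
   an interior point [xm].  Then [M u - phi(x_n) >= 0] on [K] with equality at [xm],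
   so along the sphere directions [u] has a local minimum at [xm], and along the
   axis the first and second derivative tests hold for [M u - phi].  Since
   [|A|^2 + 1/2 = 1], this gives
     [0 = M L u(xm) >= phi'' - (t/2) phi' + phi
                    = (t-2)^2 (t+4)/2 + c^2 t/2 + D (2 - c^2) - 8],
   which is positive once [D (2 - c^2) > 8].  For [a < sqrt 2] take
   [c] in [(a, sqrt 2)] and [D] large. *)

Lemma rsum_ext N f g : (forall i, (i < N)%nat -> f i = g i) -> rsum N f = rsum N g.
Proof.
  induction N as [|N IH]; intros Hfg; simpl; [reflexivity|].
  rewrite IH by (intros; apply Hfg; lia). now rewrite Hfg by lia.
Qed.

Lemma rsum_zero N f : (forall i, (i < N)%nat -> f i = 0) -> rsum N f = 0.
Proof.
  induction N as [|N IH]; intros Hf; simpl; [reflexivity|].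
  rewrite IH by (intros; apply Hf; lia). rewrite Hf by lia. ring.
Qed.

Lemma rsum_le N f g : (forall i, (i < N)%nat -> f i <= g i) -> rsum N f <= rsum N g.
Proof.
  induction N as [|N IH]; intros Hfg; simpl; [lra|].
  pose proof (Hfg N ltac:(lia)). pose proof (IH ltac:(intros; apply Hfg; lia)). lra.
Qed.

Lemma rsum_nonneg N f : (forall i, (i < N)%nat -> 0 <= f i) -> 0 <= rsum N f.
Proof.
  intros Hf. rewrite <- (rsum_zero N (fun _ => 0)) by reflexivity. now apply rsum_le.
Qed.

Lemma rsum_term_le N f i :
  (i < N)%nat -> (forall j, (j < N)%nat -> 0 <= f j) -> f i <= rsum N f.
Proof.
  induction N as [|N IH]; intros Hi Hf; simpl; [lia|].
  destruct (Nat.eq_dec i N) as [->|Hne].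
  - pose proof (rsum_nonneg N f ltac:(intros; apply Hf; lia)). lra.
  - pose proof (IH ltac:(lia) ltac:(intros; apply Hf; lia)). pose proof (Hf N ltac:(lia)). lra.
Qed.

Lemma rsum_scal N k f : rsum N (fun i => k * f i) = k * rsum N f.
Proof. induction N as [|N IH]; simpl; [ring|]. rewrite IH. ring. Qed.

Lemma rsum_update N f g i : (i < N)%nat ->
  (forall j, (j < N)%nat -> j <> i -> g j = f j) -> rsum N g = rsum N f - f i + g i.
Proof.
  induction N as [|N IH]; intros Hi Hfg; simpl; [lia|].
  destruct (Nat.eq_dec i N) as [->|Hne].
  - rewrite (rsum_ext N g f) by (intros; apply Hfg; lia). ring.
  - rewrite IH by (try lia; intros; apply Hfg; lia). rewrite (Hfg N) by lia. ring.
Qed.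

Lemma Un_cv_rsum N (f : nat -> nat -> R) (l : nat -> R) :
  (forall i, (i < N)%nat -> Un_cv (fun m => f m i) (l i)) ->
  Un_cv (fun m => rsum N (f m)) (rsum N l).
Proof.
  induction N as [|N IH]; intros Hf; simpl.
  - intros e He. exists 0%nat. intros. unfold Rdist. rewrite Rminus_diag, Rabs_R0. lra.
  - apply CV_plus; [apply IH; intros; apply Hf; lia | apply Hf; lia].
Qed.

Lemma upd_same y i s : upd y i s i = s.
Proof. unfold upd. now rewrite Nat.eqb_refl. Qed.

Lemma upd_upd y i s s' : upd (upd y i s) i s' = upd y i s'.
Proof. apply functional_extensionality; intros j; unfold upd. now destruct (Nat.eqb j i). Qed.

Lemma upd_id y i : upd y i (y i) = y.
Proof.
  apply functional_extensionality; intros j; unfold upd.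
  now destruct (Nat.eqb_spec j i); subst.
Qed.

Lemma upd_other y i s j : j <> i -> upd y i s j = y j.
Proof. intros Hji. unfold upd. now destruct (Nat.eqb_spec j i). Qed.

Lemma upd_valid N x i s : valid N x -> (i < N)%nat -> valid N (upd x i s).
Proof. intros Hx Hi j Hj. rewrite upd_other by lia. auto. Qed.

Lemma dist_self N x : dist N x x = 0.
Proof. unfold dist. rewrite rsum_zero; [apply sqrt_0|]. intros; ring. Qed.

Lemma coord_le_dist N z x i : (i < N)%nat -> Rabs (z i - x i) <= dist N z x.
Proof.
  intros Hi. unfold dist. rewrite <- sqrt_Rsqr_abs. apply sqrt_le_1_alt.
  rewrite Rsqr_pow2. apply (rsum_term_le N (fun k => (z k - x k) ^ 2) i Hi).
  intros; apply pow2_ge_0.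
Qed.

Lemma dist_le N w z x :
  (forall i, (i < N)%nat -> (w i - x i) ^ 2 <= (z i - x i) ^ 2) -> dist N w x <= dist N z x.
Proof. intros H. apply sqrt_le_1_alt, rsum_le, H. Qed.

Lemma dist_upd N x i s : (i < N)%nat -> dist N (upd x i s) x = Rabs (s - x i).
Proof.
  intros Hi. unfold dist.
  rewrite (rsum_update N (fun j => (x j - x j) ^ 2) _ i Hi).
  - rewrite rsum_zero, upd_same by (intros; ring).
    replace (0 - (x i - x i) ^ 2 + (s - x i) ^ 2) with (Rsqr (s - x i)) by (unfold Rsqr; ring).
    apply sqrt_Rsqr_abs.
  - intros j Hj Hne. now rewrite upd_other.
Qed.

Lemma local_min_deriv_eq0 (h : R -> R) (p d l : R) : 0 < d ->
  (forall s, Rabs (s - p) < d -> h p <= h s) -> derivable_pt_lim h p l -> l = 0.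
Proof.
  intros Hd Hmin Hl.
  assert (pr : derivable_pt h p) by (exists l; exact Hl).
  rewrite <- (derive_pt_eq_0 h p l pr Hl).
  apply (deriv_minimum h (p - d) (p + d) p pr); try lra.
  intros s Hs1 Hs2. apply Hmin, Rabs_def1; lra.
Qed.

(* If [h'' p < 0] then [h' < 0] just right of [p], so [h] decreases there (MVT). *)
Lemma local_min_deriv2_ge0 (h h' : R -> R) (p d L : R) : 0 < d ->
  (forall s, Rabs (s - p) < d -> h p <= h s) ->
  (forall s, Rabs (s - p) < d -> derivable_pt_lim h s (h' s)) ->
  h' p = 0 -> derivable_pt_lim h' p L -> 0 <= L.
Proof.
  intros Hd Hmin Hder Hp0 HL.
  destruct (Rle_or_lt 0 L) as [HL0|HL0]; [exact HL0|exfalso].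
  destruct (HL (- L / 2) ltac:(lra)) as [del Hdel].
  pose proof (cond_pos del).
  set (e := Rmin del d / 2).
  assert (He : 0 < e /\ e < d /\ e < del)
    by (unfold e, Rmin; destruct Rle_dec; lra).
  destruct (MVT_cor2 h h' p (p + e) ltac:(lra)) as [c [Hmvt Hc]].
  { intros c Hc. apply Hder, Rabs_def1; lra. }
  assert (Hneg : h' c < 0).
  { assert (Hq := Hdel (c - p) ltac:(apply Rgt_not_eq; lra)
                        ltac:(rewrite Rabs_right; lra)).
    replace (p + (c - p)) with c in Hq by ring. rewrite Hp0, Rminus_0_r in Hq.
    apply Rabs_def2 in Hq.
    assert (Hdiv : h' c / (c - p) < 0) by lra.
    destruct (Rle_or_lt 0 (h' c)) as [Hc0|Hc0]; [|exact Hc0].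
    assert (0 <= h' c / (c - p)) by (apply Rdiv_le_0_compat; lra). lra. }
  pose proof (Hmin (p + e) ltac:(apply Rabs_def1; lra)).
  assert (h' c * (p + e - p) < 0) by (apply Rmult_neg_pos; lra). lra.
Qed.

Lemma has_partial_upd F i G' y s : has_partial F i G' (upd y i s) ->
  derivable_pt_lim (fun t => F (upd y i t)) s (G' (upd y i s)).
Proof.
  unfold has_partial. rewrite upd_same.
  replace (fun t => F (upd (upd y i s) i t)) with (fun t => F (upd y i t)); [easy|].
  apply functional_extensionality; intros; now rewrite upd_upd.
Qed.

(* [F z - F x] telescopes along [splice z x 0 = x, ..., splice z x N = z]. *)
Definition splice (z x : nat -> R) (k : nat) : nat -> R :=
  fun i => if Nat.ltb i k then z i else x i.

Section BoundedPartials.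

Variables (N : nat) (F : (nat -> R) -> R) (G : nat -> (nat -> R) -> R).
Variables (x : nat -> R) (d M : R).
Hypothesis HM : 0 <= M.
Hypothesis Hx : valid N x.
Hypothesis Hpartial : forall w, valid N w -> dist N w x < d ->
  forall j, (j < N)%nat -> has_partial F j (G j) w /\ Rabs (G j w) <= M.

Lemma splice_step_le z k : valid N z -> dist N z x < d -> (k < N)%nat ->
  Rabs (F (splice z x (S k)) - F (splice z x k)) <= M * dist N z x.
Proof.
  intros Hz Hzd Hk.
  set (f := fun s => F (upd (splice z x k) k s)).
  assert (Ex : f (x k) = F (splice z x k)).
  { unfold f. f_equal. apply functional_extensionality; intros i. unfold upd, splice.
    destruct (Nat.eqb_spec i k); [subst; now rewrite Nat.ltb_irrefl|reflexivity]. }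
  assert (Ez : f (z k) = F (splice z x (S k))).
  { unfold f. f_equal. apply functional_extensionality; intros i. unfold upd, splice.
    destruct (Nat.eqb_spec i k), (Nat.ltb_spec i k), (Nat.ltb_spec i (S k));
      subst; reflexivity || lia. }
  rewrite <- Ex, <- Ez.
  apply Rle_trans with (M * Rabs (z k - x k));
    [|apply Rmult_le_compat_l; [exact HM|apply coord_le_dist; lia]].
  assert (Hline : forall s, Rmin (x k) (z k) <= s <= Rmax (x k) (z k) ->
    derivable_pt_lim f s (G k (upd (splice z x k) k s)) /\
    Rabs (G k (upd (splice z x k) k s)) <= M).
  { intros s Hs. set (w := upd (splice z x k) k s).
    assert (Hw : valid N w).
    { intros i Hi. unfold w, upd, splice.
      destruct (Nat.eqb_spec i k); [lia|]. destruct (Nat.ltb i k); [apply Hz|apply Hx]; lia. }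
    assert (Hwd : dist N w x < d).
    { apply Rle_lt_trans with (dist N z x); [|exact Hzd]. apply dist_le. intros i Hi.
      unfold w, upd, splice. destruct (Nat.eqb_spec i k) as [->|].
      - rewrite <- !Rsqr_pow2. apply Rsqr_le_abs_1.
        unfold Rmin, Rmax in Hs. destruct Rle_dec; unfold Rabs; do 2 destruct Rcase_abs; lra.
      - destruct (Nat.ltb i k); [lra|]. replace ((x i - x i) ^ 2) with 0 by ring. apply pow2_ge_0. }
    destruct (Hpartial w Hw Hwd k Hk) as [Hp Hb]. split; [|exact Hb].
    now apply has_partial_upd. }
  destruct (MVT_abs f (fun s => G k (upd (splice z x k) k s)) (x k) (z k)) as [c [Hmvt Hc]].
  { intros s Hs. apply (Hline s Hs). }
  rewrite Hmvt. apply Rmult_le_compat_r; [apply Rabs_pos|]. apply (Hline c Hc).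
Qed.

Lemma lipschitz_of_bounded_partials z : valid N z -> dist N z x < d ->
  Rabs (F z - F x) <= INR N * M * dist N z x.
Proof.
  intros Hz Hzd.
  assert (Hsplice : forall k, (k <= N)%nat ->
            Rabs (F (splice z x k) - F x) <= INR k * M * dist N z x).
  { induction k as [|k IH]; intros Hk.
    - replace (splice z x 0) with x by (apply functional_extensionality; now intros []).
      rewrite Rminus_diag, Rabs_R0. simpl. lra.
    - pose proof (splice_step_le z k Hz Hzd ltac:(lia)). pose proof (IH ltac:(lia)).
      replace (F (splice z x (S k)) - F x) with
        ((F (splice z x (S k)) - F (splice z x k)) + (F (splice z x k) - F x)) by ring.
      eapply Rle_trans; [apply Rabs_triang|]. rewrite S_INR. lra. }
  replace z with (splice z x N) at 1; [apply Hsplice; lia|].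
  apply functional_extensionality; intros i. unfold splice.
  destruct (Nat.ltb_spec i N); [reflexivity|]. rewrite Hx, Hz by lia. reflexivity.
Qed.

End BoundedPartials.

Lemma uniform_radius K (P : nat -> R -> Prop) :
  (forall k d d', 0 < d' <= d -> P k d -> P k d') ->
  (forall k, (k < K)%nat -> exists d, 0 < d /\ P k d) ->
  exists d, 0 < d /\ forall k, (k < K)%nat -> P k d.
Proof.
  intros Hmono H. induction K as [|K IH].
  - exists 1. split; [lra|]. intros; lia.
  - destruct IH as [d1 [Hd1 H1]]; [intros; apply H; lia|].
    destruct (H K ltac:(lia)) as [d2 [Hd2 H2]].
    assert (Hm : 0 < Rmin d1 d2) by (unfold Rmin; destruct Rle_dec; lra).
    exists (Rmin d1 d2). split; [exact Hm|]. intros k Hk.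
    destruct (Nat.eq_dec k K) as [->|Hne].
    + apply (Hmono K d2); [split; [exact Hm|apply Rmin_r]|exact H2].
    + apply (Hmono k d1); [split; [exact Hm|apply Rmin_l]|apply H1; lia].
Qed.

Lemma bounded_near_of_cont_at N x (f : nat -> nat -> (nat -> R) -> R) :
  (forall i j, (i < N)%nat -> (j < N)%nat -> cont_at N (f i j) x) ->
  exists d B, 0 < d /\ 0 <= B /\ forall i j w, (i < N)%nat -> (j < N)%nat ->
    valid N w -> dist N w x < d -> Rabs (f i j w) <= B.
Proof.
  intros Hc.
  set (close := fun i j d => forall w, valid N w -> dist N w x < d ->
                               Rabs (f i j w - f i j x) < 1).
  destruct (uniform_radius N (fun i d => forall j, (j < N)%nat -> close i j d))
    as [d [Hd Hclose]].
  { intros i d d' Hd Hp j Hj w Hw Hwd. apply (Hp j Hj w Hw). lra. }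
  { intros i Hi. apply (uniform_radius N (close i)).
    - intros j d d' Hd Hp w Hw Hwd. apply (Hp w Hw). lra.
    - intros j Hj. destruct (Hc i j Hi Hj 1 ltac:(lra)) as [d [Hd Hd']]. now exists d. }
  set (S := fun i => rsum N (fun j => Rabs (f i j x))).
  assert (HS : 0 <= rsum N S)
    by (apply rsum_nonneg; intros; apply rsum_nonneg; intros; apply Rabs_pos).
  exists d, (rsum N S + 1). split; [exact Hd|]. split; [lra|]. intros i j w Hi Hj Hw Hwd.
  assert (Rabs (f i j x) <= rsum N S).
  { apply Rle_trans with (S i).
    - apply (rsum_term_le N (fun j => Rabs (f i j x)) j Hj). intros; apply Rabs_pos.
    - apply (rsum_term_le N S i Hi). intros; apply rsum_nonneg; intros; apply Rabs_pos. }
  pose proof (Hclose i Hi j Hj w Hw Hwd).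
  pose proof (Rabs_triang_inv (f i j w) (f i j x)). lra.
Qed.

Lemma cont_at_of_lipschitz N F x d C : 0 < d -> 0 <= C ->
  (forall w, valid N w -> dist N w x < d -> Rabs (F w - F x) <= C * dist N w x) ->
  cont_at N F x.
Proof.
  intros Hd HC HF eps Heps.
  assert (HC1 : 0 < C + 1) by lra.
  exists (Rmin d (eps / (C + 1))).
  split; [unfold Rmin; destruct Rle_dec; [lra|apply Rdiv_lt_0_compat; lra]|].
  intros w Hw Hwd.
  assert (Hwd1 : dist N w x < d) by (pose proof (Rmin_l d (eps / (C + 1))); lra).
  assert (Hwd2 : dist N w x < eps / (C + 1)) by (pose proof (Rmin_r d (eps / (C + 1))); lra).
  assert (Hdist0 : 0 <= dist N w x) by apply sqrt_pos.
  assert ((C + 1) * dist N w x < eps).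
  { apply Rmult_lt_compat_l with (r := C + 1) in Hwd2; [|exact HC1].
    now replace ((C + 1) * (eps / (C + 1))) with eps in Hwd2 by (field; lra). }
  pose proof (HF w Hw Hwd1). nra.
Qed.

(* The second partials are bounded near [x]; integrating them bounds the first
   partials, and integrating those makes [F] Lipschitz at [x]. *)
Lemma C2_ball_cont_at N F G H x r : valid N x -> C2_ball N F G H x r -> cont_at N F x.
Proof.
  intros Hx [Hr HC].
  assert (Hx0 : dist N x x < r) by (rewrite dist_self; exact Hr).
  destruct (bounded_near_of_cont_at N x H) as [d1 [BH [Hd1 [HBH0 HBH]]]].
  { intros i j Hi Hj. apply (HC x Hx Hx0 i j Hi Hj). }
  set (d := Rmin d1 r).
  assert (Hd : 0 < d /\ d <= d1 /\ d <= r)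
    by (unfold d, Rmin; destruct Rle_dec; lra).
  set (BG := rsum N (fun i => Rabs (G i x)) + INR N * BH * d).
  assert (HBG : forall i w, (i < N)%nat -> valid N w -> dist N w x < d -> Rabs (G i w) <= BG).
  { intros i w Hi Hw Hwd.
    assert (HGi := lipschitz_of_bounded_partials N (G i) (H i) x d BH HBH0 Hx).
    specialize (HGi ltac:(intros w' Hw' Hw'd j Hj; split;
                          [apply (HC w' Hw' ltac:(lra) i j Hi Hj)|apply HBH; auto; lra])
                    w Hw Hwd).
    assert (INR N * BH * dist N w x <= INR N * BH * d).
    { apply Rmult_le_compat_l; [apply Rmult_le_pos; [apply pos_INR|exact HBH0]|lra]. }
    pose proof (rsum_term_le N (fun i => Rabs (G i x)) i Hi ltac:(intros; apply Rabs_pos)).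
    pose proof (Rabs_triang_inv (G i w) (G i x)). unfold BG. lra. }
  assert (HBG0 : 0 <= BG).
  { pose proof (rsum_nonneg N (fun i => Rabs (G i x)) ltac:(intros; apply Rabs_pos)).
    assert (0 <= INR N * BH * d)
      by (apply Rmult_le_pos; [apply Rmult_le_pos; [apply pos_INR|exact HBH0]|lra]).
    unfold BG. lra. }
  assert (HF := lipschitz_of_bounded_partials N F G x d BG HBG0 Hx).
  specialize (HF ltac:(intros w Hw Hwd j Hj; split;
                       [apply (HC w Hw ltac:(lra) j j Hj Hj)|apply HBG; auto])).
  apply (cont_at_of_lipschitz N F x d (INR N * BG)); [lra| |exact HF].
  apply Rmult_le_pos; [apply pos_INR|exact HBG0].
Qed.

Definition cyl_proj (n : nat) (y : nat -> R) : nat -> R := fun i =>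
  if Nat.ltb i n then rad n * y i / sqrt (rsum n (fun k => y k ^ 2))
  else if Nat.eqb i n then y n else 0.

Lemma hext_cyl_proj n u y : hext n u y = u (cyl_proj n y).
Proof. reflexivity. Qed.

Lemma rad_pos n : (2 <= n)%nat -> 0 < rad n.
Proof. intros Hn. apply sqrt_lt_R0. apply le_INR in Hn. simpl in Hn. lra. Qed.

Lemma cyl_proj_on_cyl n y : 0 < rsum n (fun k => y k ^ 2) ->
  on_cyl n (cyl_proj n y) /\ cyl_proj n y n = y n.
Proof.
  intros Hpos. split; [split|].
  - intros i Hi. unfold cyl_proj.
    destruct (Nat.ltb_spec i n), (Nat.eqb_spec i n); lia || reflexivity.
  - set (S := rsum n (fun k => y k ^ 2)) in *.
    assert (Hsq : sqrt S ^ 2 = S) by (simpl; rewrite Rmult_1_r; apply sqrt_sqrt; lra).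
    assert (0 < sqrt S) by (apply sqrt_lt_R0; lra).
    rewrite (rsum_ext n _ (fun k => (rad n ^ 2 / S) * y k ^ 2)).
    + rewrite rsum_scal. fold S. field. lra.
    + intros i Hi. unfold cyl_proj. destruct (Nat.ltb_spec i n); [|lia].
      fold S. rewrite <- Hsq at 2. field. lra.
  - unfold cyl_proj. now rewrite Nat.ltb_irrefl, Nat.eqb_refl.
Qed.

Lemma cyl_proj_id n x : (2 <= n)%nat -> on_cyl n x -> cyl_proj n x = x.
Proof.
  intros Hn [Hv Hs]. apply functional_extensionality; intros i. unfold cyl_proj.
  pose proof (rad_pos n Hn).
  rewrite Hs, sqrt_pow2 by lra.
  destruct (Nat.ltb_spec i n); [field; lra|].
  destruct (Nat.eqb_spec i n) as [->|]; [reflexivity|]. rewrite Hv by lia. reflexivity.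
Qed.

Lemma hext_on_cyl n u x : (2 <= n)%nat -> on_cyl n x -> hext n u x = u x.
Proof. intros Hn Hx. now rewrite hext_cyl_proj, cyl_proj_id. Qed.

Lemma on_cyl_exists n t : (1 <= n)%nat -> exists x, on_cyl n x /\ x n = t.
Proof.
  intros Hn.
  exists (fun i => if Nat.eqb i 0 then rad n else if Nat.eqb i n then t else 0).
  split; [split|].
  - intros i Hi. destruct (Nat.eqb_spec i 0), (Nat.eqb_spec i n); lia || reflexivity.
  - rewrite (rsum_update n (fun _ => 0) _ 0%nat); [|lia|].
    + rewrite rsum_zero by reflexivity. simpl. ring.
    + intros j Hj Hne. destruct (Nat.eqb_spec j 0), (Nat.eqb_spec j n); lia || ring.
  - destruct (Nat.eqb_spec n 0); [lia|]. now rewrite Nat.eqb_refl.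
Qed.

Lemma on_cyl_upd_axis n x s : on_cyl n x -> on_cyl n (upd x n s).
Proof.
  intros [Hv Hs]. split; [apply upd_valid; [exact Hv|lia]|].
  rewrite <- Hs. apply rsum_ext. intros k Hk. now rewrite upd_other by lia.
Qed.

(* The bound on [s] keeps the sphere part of [upd x i s] away from the origin. *)
Lemma on_cyl_proj_upd_sphere n x i s : on_cyl n x -> (i < n)%nat ->
  Rabs (s - x i) < rad n ->
  on_cyl n (cyl_proj n (upd x i s)) /\ cyl_proj n (upd x i s) n = x n.
Proof.
  intros Hx Hi Hs.
  assert (Hsum : rsum n (fun k => upd x i s k ^ 2) = rad n ^ 2 - x i ^ 2 + s ^ 2).
  { rewrite (rsum_update n (fun k => x k ^ 2) _ i Hi).
    - now rewrite (proj2 Hx), upd_same.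
    - intros j Hj Hne. now rewrite upd_other. }
  assert (Hxi : x i ^ 2 <= rad n ^ 2).
  { rewrite <- (proj2 Hx). apply (rsum_term_le n (fun k => x k ^ 2) i Hi).
    intros; apply pow2_ge_0. }
  assert (Hpos : 0 < rsum n (fun k => upd x i s k ^ 2)).
  { rewrite Hsum. destruct (Req_dec s 0) as [->|Hs0].
    - rewrite Rminus_0_l, Rabs_Ropp in Hs. pose proof (Rabs_pos (x i)).
      rewrite <- (Rsqr_pow2 (x i)), Rsqr_abs, Rsqr_pow2.
      nra.
    - pose proof (pow2_gt_0 s Hs0). lra. }
  destruct (cyl_proj_on_cyl n _ Hpos) as [Hon Hlast].
  split; [exact Hon|]. rewrite Hlast. apply upd_other. lia.
Qed.

Definition strict_incr (sigma : nat -> nat) : Prop := forall m, (sigma m < sigma (S m))%nat.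

Lemma strict_incr_ge sigma : strict_incr sigma -> forall m, (m <= sigma m)%nat.
Proof. intros H m. induction m as [|m IH]; [lia|]. specialize (H m). lia. Qed.

Lemma strict_incr_comp sigma tau : strict_incr sigma -> strict_incr tau ->
  strict_incr (fun m => sigma (tau m)).
Proof.
  intros Hs Ht m. assert (Hmono : forall p q, (p < q)%nat -> (sigma p < sigma q)%nat).
  { intros p q Hpq. induction Hpq as [|q Hpq IH]; [apply Hs|]. specialize (Hs q). lia. }
  apply Hmono, Ht.
Qed.

Lemma Un_cv_const (a : R) : Un_cv (fun _ => a) a.
Proof. intros e He. exists 0%nat. intros. unfold Rdist. rewrite Rminus_diag, Rabs_R0. lra. Qed.

Lemma Un_cv_subseq (u : nat -> R) l sigma : strict_incr sigma ->
  Un_cv u l -> Un_cv (fun m => u (sigma m)) l.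
Proof.
  intros Hs H e He. destruct (H e He) as [K HK]. exists K. intros m Hm.
  apply HK. pose proof (strict_incr_ge sigma Hs m). lia.
Qed.

(* Stdlib's [Bolzano_Weierstrass] only gives an adherence value; a subsequence
   converging to it is extracted by choice. *)
Lemma bounded_subseq_cv (u : nat -> R) (B : R) : (forall m, Rabs (u m) <= B) ->
  exists sigma l, strict_incr sigma /\ Un_cv (fun m => u (sigma m)) l.
Proof.
  intros HB.
  destruct (Bolzano_Weierstrass u (fun c => -B <= c <= B) (compact_P3 (-B) B)) as [l Hl].
  { intros m. specialize (HB m). apply Rabs_le_between in HB. exact HB. }
  assert (Hnear : forall k N : nat, exists p, (N <= p)%nat /\ Rabs (u p - l) < / (INR k + 1)).
  { intros k N.
    assert (Hpos : 0 < / (INR k + 1))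
      by (apply Rinv_0_lt_compat; pose proof (pos_INR k); lra).
    destruct (Hl (disc l (mkposreal _ Hpos)) N) as [p Hp]; [|now exists p].
    exists (mkposreal _ Hpos). now intros y Hy. }
  destruct (choice (fun kN p => (snd kN <= p)%nat /\ Rabs (u p - l) < / (INR (fst kN) + 1)))
    as [pick Hpick]; [intros [k N]; apply Hnear|].
  set (sigma := fix sigma m := match m with
                               | O => pick (O, O)
                               | S m' => pick (S m', S (sigma m')) end).
  assert (Hclose : forall m, Rabs (u (sigma m) - l) < / (INR m + 1))
    by (intros [|m]; [apply (Hpick (O, O))|apply (Hpick (S m, _))]).
  exists sigma, l. split.
  - intros m. apply (Hpick (S m, S (sigma m))).
  - intros e He. destruct (archimed_cor1 e He) as [K [HK1 HK2]].
    exists K. intros m Hm. unfold Rdist.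
    assert (/ (INR m + 1) <= / INR K).
    { apply Rinv_le_contravar; [apply lt_0_INR; lia|]. apply le_INR in Hm. lra. }
    pose proof (Hclose m). lra.
Qed.

Lemma bounded_subseq_cv_vec (N : nat) (B : R) (x : nat -> nat -> R) :
  (forall m i, (i < N)%nat -> Rabs (x m i) <= B) ->
  exists sigma l, strict_incr sigma /\
    forall i, (i < N)%nat -> Un_cv (fun m => x (sigma m) i) (l i).
Proof.
  induction N as [|N IH]; intros HB.
  - exists (fun m => m), (fun _ => 0). split; [intros m; lia|]. intros; lia.
  - destruct IH as [sigma [l [Hs Hl]]]; [intros; apply HB; lia|].
    destruct (bounded_subseq_cv (fun m => x (sigma m) N) B) as [tau [l' [Ht Hl']]];
      [intros; apply HB; lia|].
    exists (fun m => sigma (tau m)), (fun i => if Nat.eqb i N then l' else l i).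
    split; [now apply strict_incr_comp|]. intros i Hi.
    destruct (Nat.eqb_spec i N) as [->|Hne]; [exact Hl'|].
    apply (Un_cv_subseq (fun m => x (sigma m) i)); [exact Ht|]. apply Hl; lia.
Qed.

Lemma cont_at_Un_cv N F x (ys : nat -> nat -> R) : cont_at N F x ->
  (forall m, valid N (ys m)) ->
  (forall i, (i < N)%nat -> Un_cv (fun m => ys m i) (x i)) ->
  Un_cv (fun m => F (ys m)) (F x).
Proof.
  intros HF Hys Hcv.
  assert (Hdist : Un_cv (fun m => dist N (ys m) x) 0).
  { rewrite <- sqrt_0. apply continuity_seq; [apply continuity_pt_sqrt; lra|].
    rewrite <- (rsum_zero N (fun i => (x i - x i) ^ 2)) by (intros; ring).
    apply Un_cv_rsum. intros i Hi.
    apply (continuity_seq (fun t => (t - x i) ^ 2)); [|now apply Hcv].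
    apply derivable_continuous_pt. reg. }
  intros e He. destruct (HF e He) as [d [Hd Hclose]].
  destruct (Hdist d Hd) as [K HK]. exists K. intros m Hm.
  apply Hclose; [apply Hys|]. specialize (HK m Hm). unfold Rdist in HK.
  rewrite Rminus_0_r in HK. pose proof (Rle_abs (dist N (ys m) x)). lra.
Qed.

Definition subseq_compact {T : Type} (K : T -> Prop) (f : T -> R) : Prop :=
  forall xs : nat -> T, (forall m, K (xs m)) ->
    exists sigma x, strict_incr sigma /\ K x /\ Un_cv (fun m => f (xs (sigma m))) (f x).

Lemma subseq_compact_bound {T : Type} (K : T -> Prop) (f : T -> R) :
  subseq_compact K f -> bound (fun r => exists x, K x /\ r = f x).
Proof.
  intros Hcomp. apply NNPP. intros Hunb.
  assert (Hbig : forall m : nat, exists x, K x /\ INR m < f x).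
  { intros m. apply NNPP. intros Hno. apply Hunb. exists (INR m).
    intros r [x [Hx ->]]. apply Rnot_lt_le. intros Hlt. apply Hno. now exists x. }
  destruct (choice _ Hbig) as [xs Hxs].
  destruct (Hcomp xs (fun m => proj1 (Hxs m))) as [sigma [x [Hs [_ Hcv]]]].
  destruct (Hcv 1 ltac:(lra)) as [N HN].
  destruct (INR_archimed 1 (f x + 1) ltac:(lra)) as [M HM].
  specialize (HN (Nat.max N M) ltac:(lia)). unfold Rdist in HN. apply Rabs_def2 in HN.
  pose proof (proj2 (Hxs (sigma (Nat.max N M)))).
  assert (INR M <= INR (sigma (Nat.max N M)))
    by (apply le_INR; pose proof (strict_incr_ge sigma Hs (Nat.max N M)); lia).
  lra.
Qed.

Lemma subseq_compact_attains_max {T : Type} (K : T -> Prop) (f : T -> R) (x0 : T) :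
  K x0 -> subseq_compact K f -> exists xm, K xm /\ forall x, K x -> f x <= f xm.
Proof.
  intros Hx0 Hcomp.
  destruct (completeness _ (subseq_compact_bound K f Hcomp) ltac:(exists (f x0), x0; auto))
    as [S [Hub Hleast]].
  assert (Hle : forall x, K x -> f x <= S) by (intros x Hx; apply Hub; now exists x).
  assert (Hclose : forall m : nat, exists x, K x /\ S - / (INR m + 1) < f x).
  { intros m. apply NNPP. intros Hno.
    assert (0 < / (INR m + 1)) by (apply Rinv_0_lt_compat; pose proof (pos_INR m); lra).
    enough (S <= S - / (INR m + 1)) by lra.
    apply Hleast. intros r [x [Hx ->]]. apply Rnot_lt_le. intros Hlt. apply Hno. now exists x. }
  destruct (choice _ Hclose) as [xs Hxs].
  destruct (Hcomp xs (fun m => proj1 (Hxs m))) as [sigma [xm [Hs [Hxm Hcv]]]].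
  assert (HS : f xm = S).
  { apply Rle_antisym; [now apply Hle|]. apply Rnot_lt_le. intros Hlt.
    set (e := (S - f xm) / 2).
    destruct (Hcv e ltac:(unfold e; lra)) as [N HN].
    destruct (archimed_cor1 e ltac:(unfold e; lra)) as [M [HM1 HM2]].
    set (m := Nat.max N M).
    specialize (HN m ltac:(unfold m; lia)). unfold Rdist in HN. apply Rabs_def2 in HN.
    pose proof (proj2 (Hxs (sigma m))).
    assert (/ (INR (sigma m) + 1) <= / INR M).
    { apply Rinv_le_contravar; [apply lt_0_INR; lia|].
      assert (INR M <= INR (sigma m))
        by (apply le_INR; pose proof (strict_incr_ge sigma Hs m); unfold m in *; lia).
      lra. }
    unfold e in *. lra. }
  exists xm. split; [exact Hxm|]. rewrite HS. exact Hle.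
Qed.

Definition slab (n : nat) (c D : R) (x : nat -> R) : Prop := on_cyl n x /\ c <= x n <= D.

Lemma slab_subseq_cv n c D (xs : nat -> nat -> R) : (forall m, slab n c D (xs m)) ->
  exists sigma xst, strict_incr sigma /\ slab n c D xst /\
    forall i, (i < S n)%nat -> Un_cv (fun m => xs (sigma m) i) (xst i).
Proof.
  intros Hxs.
  destruct (bounded_subseq_cv_vec (S n) (rad n + Rabs c + Rabs D) xs) as [sigma [l [Hs Hl]]].
  { intros m i Hi. destruct (Hxs m) as [[_ Hsum] Hb].
    pose proof (sqrt_pos (2 * (INR n - 1))). fold (rad n) in *.
    destruct (Nat.eq_dec i n) as [->|Hne].
    - apply Rabs_le_between. pose proof (Rle_abs D). pose proof (Rabs_pos D).
      pose proof (Rle_abs (- c)) as Hc. rewrite Rabs_Ropp in Hc.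
      pose proof (Rabs_pos c). split; lra.
    - assert (xs m i ^ 2 <= rad n ^ 2).
      { rewrite <- Hsum. apply (rsum_term_le n (fun k => xs m k ^ 2) i ltac:(lia)).
        intros; apply pow2_ge_0. }
      assert (Rabs (xs m i) <= rad n).
      { rewrite <- (Rabs_right (rad n)) by lra. apply Rsqr_le_abs_0. now rewrite !Rsqr_pow2. }
      pose proof (Rabs_pos c). pose proof (Rabs_pos D). lra. }
  set (xst := fun i => if Nat.leb i n then l i else 0).
  assert (Hcv : forall i, (i < S n)%nat -> Un_cv (fun m => xs (sigma m) i) (xst i)).
  { intros i Hi. unfold xst. destruct (Nat.leb_spec i n); [now apply Hl|lia]. }
  exists sigma, xst. split; [exact Hs|]. split; [|exact Hcv]. split; [split|].
  - intros i Hi. unfold xst. destruct (Nat.leb_spec i n); [lia|reflexivity].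
  - apply (UL_sequence (fun m => rsum n (fun i => xs (sigma m) i ^ 2))).
    + apply Un_cv_rsum with (f := fun m i => xs (sigma m) i ^ 2). intros i Hi.
      apply (continuity_seq (fun t => t ^ 2)); [apply derivable_continuous_pt; reg|].
      apply Hcv. lia.
    + rewrite (functional_extensionality _ (fun _ => rad n ^ 2)); [apply Un_cv_const|].
      intros m. apply (Hxs (sigma m)).
  - split.
    + apply Rle_cv_lim with (Un := fun _ => c) (Vn := fun m => xs (sigma m) n);
        [intros m; apply (Hxs (sigma m))|apply Un_cv_const|apply Hcv; lia].
    + apply Rle_cv_lim with (Un := fun m => xs (sigma m) n) (Vn := fun _ => D);
        [intros m; apply (Hxs (sigma m))|apply Hcv; lia|apply Un_cv_const].
Qed.

Definition phi (c D t : R) : R := (t * t - c * c) * (D - t).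
Definition phi_d1 (c D t : R) : R := -3 * t * t + 2 * D * t + c * c.
Definition phi_d2 (D t : R) : R := -6 * t + 2 * D.

Lemma phi_derive c D t : derivable_pt_lim (phi c D) t (phi_d1 c D t).
Proof. apply is_derive_Reals. unfold phi, phi_d1. auto_derive; [exact I|ring]. Qed.

Lemma phi_d1_derive c D t : derivable_pt_lim (phi_d1 c D) t (phi_d2 D t).
Proof. apply is_derive_Reals. unfold phi_d1, phi_d2. auto_derive; [exact I|ring]. Qed.

Lemma phi_L_pos c D t : 0 < t -> 8 < D * (2 - c * c) ->
  0 < phi_d2 D t - / 2 * t * phi_d1 c D t + phi c D t.
Proof.
  intros Ht HD. unfold phi, phi_d1, phi_d2.
  assert (0 <= (t - 2) ^ 2 * (t + 4)) by (apply Rmult_le_pos; [apply pow2_ge_0|lra]).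
  assert (0 <= c * c * t) by (apply Rmult_le_pos; nra).
  nra.
Qed.

Lemma Un_cv_phi_div (a b : nat -> R) (la lb : R) c D : Un_cv a la -> Un_cv b lb -> lb <> 0 ->
  Un_cv (fun m => phi c D (a m) / b m) (phi c D la / lb).
Proof.
  intros Ha Hb Hlb. apply CV_mult.
  - apply continuity_seq; [|exact Ha]. unfold phi. apply derivable_continuous_pt. reg.
  - apply (continuity_seq (fun y => / y)); [|exact Hb]. apply derivable_continuous_pt. reg.
Qed.

Lemma slab_max_ratio n (u : (nat -> R) -> R) c D : (2 <= n)%nat -> 0 <= c -> c < D ->
  (forall x, slab n c D x -> cont_at (S n) (hext n u) x) ->
  (forall x, slab n c D x -> 0 < u x) ->
  exists xm M, 0 < M /\ slab n c D xm /\ phi c D (xm n) = M * u xm /\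
    forall x, slab n c D x -> phi c D (x n) <= M * u x.
Proof.
  intros Hn Hc HcD Hcont Hpos.
  set (ratio := fun x : nat -> R => phi c D (x n) / u x).
  destruct (on_cyl_exists n ((c + D) / 2) ltac:(lia)) as [x0 [Hx0 Hx0n]].
  assert (Hslab0 : slab n c D x0) by (split; [exact Hx0|rewrite Hx0n; lra]).
  destruct (subseq_compact_attains_max (slab n c D) ratio x0 Hslab0) as [xm [Hxm Hmax]].
  { intros xs Hxs. destruct (slab_subseq_cv n c D xs Hxs) as [sigma [xst [Hs [Hxst Hcv]]]].
    exists sigma, xst. split; [exact Hs|]. split; [exact Hxst|].
    apply Un_cv_phi_div; [apply Hcv; lia| |apply Rgt_not_eq, Hpos, Hxst].
    rewrite <- (hext_on_cyl n u xst Hn (proj1 Hxst)).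
    rewrite (functional_extensionality (fun m => u (xs (sigma m)))
                                       (fun m => hext n u (xs (sigma m))))
      by (intros m; symmetry; apply hext_on_cyl, Hxs; exact Hn).
    apply (cont_at_Un_cv (S n)); [now apply Hcont| |exact Hcv].
    intros m. apply (Hxs (sigma m)). }
  assert (Hratio : forall x, slab n c D x -> phi c D (x n) = ratio x * u x)
    by (intros x Hx; unfold ratio; field; apply Rgt_not_eq, Hpos, Hx).
  exists xm, (ratio xm). split; [|split; [exact Hxm|split; [now apply Hratio|]]].
  - apply Rlt_le_trans with (ratio x0); [|now apply Hmax].
    unfold ratio, phi. rewrite Hx0n. apply Rdiv_lt_0_compat; [|now apply Hpos].
    apply Rmult_lt_0_compat; nra.
  - intros x Hx. rewrite Hratio by exact Hx.
    apply Rmult_le_compat_r; [left; now apply Hpos|now apply Hmax].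
Qed.

Lemma C2_ball_line_deriv N F G H x r i s : valid N x -> (i < N)%nat -> C2_ball N F G H x r ->
  Rabs (s - x i) < r -> derivable_pt_lim (fun t => F (upd x i t)) s (G i (upd x i s)).
Proof.
  intros Hx Hi [_ HC] Hs.
  destruct (HC (upd x i s) ltac:(now apply upd_valid) ltac:(now rewrite dist_upd) i i Hi Hi)
    as [Hp _].
  now apply has_partial_upd.
Qed.

Lemma C2_ball_line_min N F G H x r i (g g1 g2 : R -> R) M d :
  valid N x -> (i < N)%nat -> C2_ball N F G H x r -> 0 < d ->
  (forall t, derivable_pt_lim g t (g1 t)) -> (forall t, derivable_pt_lim g1 t (g2 t)) ->
  (forall s, Rabs (s - x i) < d -> M * F x - g (x i) <= M * F (upd x i s) - g s) ->
  M * G i x = g1 (x i) /\ g2 (x i) <= M * H i i x.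
Proof.
  intros Hx Hi HC2 Hd Hg Hg1 Hmin.
  pose proof HC2 as [Hr HC].
  set (h := fun s => M * F (upd x i s) - g s).
  set (h' := fun s => M * G i (upd x i s) - g1 s).
  set (del := Rmin d r).
  assert (Hdel : 0 < del /\ del <= d /\ del <= r) by (unfold del, Rmin; destruct Rle_dec; lra).
  assert (Hhmin : forall s, Rabs (s - x i) < del -> h (x i) <= h s).
  { intros s Hs. unfold h. rewrite upd_id. apply Hmin. lra. }
  assert (Hh : forall s, Rabs (s - x i) < del -> derivable_pt_lim h s (h' s)).
  { intros s Hs. apply (derivable_pt_lim_minus (mult_real_fct M (fun t => F (upd x i t)))).
    - apply derivable_pt_lim_scal, (C2_ball_line_deriv N F G H x r); auto; lra.
    - apply Hg. }
  assert (Hh' : derivable_pt_lim h' (x i) (M * H i i x - g2 (x i))).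
  { apply (derivable_pt_lim_minus (mult_real_fct M (fun t => G i (upd x i t)))); [|apply Hg1].
    apply derivable_pt_lim_scal.
    destruct (HC x Hx ltac:(now rewrite dist_self) i i Hi Hi) as [_ [Hp _]]. exact Hp. }
  assert (Hcrit : h' (x i) = 0).
  { apply (local_min_deriv_eq0 h (x i) del); [lra|exact Hhmin|].
    apply Hh. rewrite Rminus_diag, Rabs_R0. lra. }
  pose proof (local_min_deriv2_ge0 h h' (x i) del _ ltac:(lra) Hhmin Hh Hcrit Hh').
  unfold h' in Hcrit. rewrite upd_id in Hcrit. split; lra.
Qed.

Section Maximizer.

Variables (n : nat) (u : (nat -> R) -> R) (c D M : R) (xm : nat -> R).
Variables (G : nat -> (nat -> R) -> R) (H : nat -> nat -> (nat -> R) -> R) (r : R).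
Hypothesis Hn : (2 <= n)%nat.
Hypothesis HM : 0 < M.
Hypothesis Hux : 0 < u xm.
Hypothesis Hxm : slab n c D xm.
Hypothesis Hmax_eq : phi c D (xm n) = M * u xm.
Hypothesis Hmax : forall x, slab n c D x -> phi c D (x n) <= M * u x.
Hypothesis HC2 : C2_ball (S n) (hext n u) G H xm r.

Let Hvalid : valid (S n) xm := proj1 (proj1 Hxm).

Lemma hext_maximizer : hext n u xm = u xm.
Proof. exact (hext_on_cyl n u xm Hn (proj1 Hxm)). Qed.

Lemma maximizer_interior : c < xm n < D.
Proof.
  assert (Hphi : 0 < phi c D (xm n)) by (rewrite Hmax_eq; apply Rmult_lt_0_compat; lra).
  assert (Hrange : c <= xm n <= D) by apply Hxm.
  destruct Hrange as [[Hct|Hct] [HtD|HtD]]; [split; assumption|..]; exfalso;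
    unfold phi in Hphi.
  - rewrite HtD, Rminus_diag, Rmult_0_r in Hphi. lra.
  - rewrite <- Hct, Rminus_diag, Rmult_0_l in Hphi. lra.
  - rewrite <- Hct, Rminus_diag, Rmult_0_l in Hphi. lra.
Qed.

(* Along each sphere coordinate [u] is minimal at [xm]: the projection back to the
   cylinder keeps [x_n], where [M u >= phi(x_n) = M u(xm)]. *)
Lemma maximizer_sphere_crit i : (i < n)%nat -> G i xm = 0 /\ 0 <= H i i xm.
Proof.
  intros Hi.
  destruct (C2_ball_line_min (S n) (hext n u) G H xm r i (fun _ => 0) (fun _ => 0) (fun _ => 0)
              1 (rad n) Hvalid ltac:(lia) HC2 (rad_pos n Hn)) as [HG HH].
  - intros s. apply derivable_pt_lim_const.
  - intros s. apply derivable_pt_lim_const.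
  - intros s Hs. rewrite hext_maximizer, hext_cyl_proj.
    destruct (on_cyl_proj_upd_sphere n xm i s (proj1 Hxm) Hi Hs) as [Hon Hlast].
    assert (phi c D (xm n) <= M * u (cyl_proj n (upd xm i s)))
      by (rewrite <- Hlast; apply Hmax; split; [exact Hon|rewrite Hlast; apply Hxm]).
    nra.
  - lra.
Qed.

Lemma maximizer_axis_crit :
  M * G n xm = phi_d1 c D (xm n) /\ phi_d2 D (xm n) <= M * H n n xm.
Proof.
  pose proof maximizer_interior.
  apply (C2_ball_line_min (S n) (hext n u) G H xm r n (phi c D) (phi_d1 c D) (phi_d2 D)
           M (Rmin (xm n - c) (D - xm n)) Hvalid ltac:(lia) HC2).
  - unfold Rmin. destruct Rle_dec; lra.
  - apply phi_derive.
  - apply phi_d1_derive.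
  - intros s Hs.
    rewrite hext_maximizer, hext_on_cyl by (try exact Hn; now apply on_cyl_upd_axis, Hxm).
    pose proof (Rmin_l (xm n - c) (D - xm n)). pose proof (Rmin_r (xm n - c) (D - xm n)).
    apply Rabs_def2 in Hs.
    assert (phi c D s <= M * u (upd xm n s)).
    { rewrite <- (upd_same xm n s) at 1. apply Hmax.
      split; [now apply on_cyl_upd_axis, Hxm|rewrite upd_same; lra]. }
    lra.
Qed.

(* [|A|^2 + 1/2 = 1]; with the critical-point facts, [M L u >= phi'' - (t/2) phi' + phi]. *)
Lemma maximizer_Lop_pos : 0 < c -> 8 < D * (2 - c * c) -> 0 < Lop n (hext n u) G H xm.
Proof.
  intros Hc HD.
  pose proof maximizer_interior. destruct maximizer_axis_crit as [HG HH].
  pose proof (phi_L_pos c D (xm n) ltac:(lra) HD).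
  assert (HA : 0 <= rsum n (fun i => H i i xm))
    by (apply rsum_nonneg; intros i Hi; apply (maximizer_sphere_crit i Hi)).
  assert (HxG : rsum n (fun i => xm i * G i xm) = 0)
    by (apply rsum_zero; intros i Hi; rewrite (proj1 (maximizer_sphere_crit i Hi)); ring).
  apply (Rmult_lt_reg_l M); [exact HM|]. rewrite Rmult_0_r.
  unfold Lop, cylA2. simpl rsum. rewrite HxG, hext_maximizer.
  assert (0 <= M * rsum n (fun i => H i i xm)) by (apply Rmult_le_pos; lra).
  nra.
Qed.

End Maximizer.

Lemma slab_unstable n c D (Omega : (nat -> R) -> Prop) :
  (2 <= n)%nat -> 0 < c -> c < D -> 8 < D * (2 - c * c) ->
  (forall x, slab n c D x -> Omega x) -> unstable n Omega.
Proof.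
  intros Hn Hc HcD HD HOmega [u Hu].
  assert (Hdata : forall x, slab n c D x -> exists G H r,
            C2_ball (S n) (hext n u) G H x r /\ Lop n (hext n u) G H x = 0 /\ 0 < u x)
    by (intros x Hx; apply Hu; [apply Hx|apply HOmega, Hx]).
  destruct (slab_max_ratio n u c D Hn ltac:(lra) HcD) as [xm [M [HM [Hxm [Heq Hle]]]]].
  - intros x Hx. destruct (Hdata x Hx) as [G [H [r [HC2 _]]]].
    exact (C2_ball_cont_at _ _ _ _ x r (proj1 (proj1 Hx)) HC2).
  - intros x Hx. now destruct (Hdata x Hx) as [G [H [r [_ [_ Hp]]]]].
  - destruct (Hdata xm Hxm) as [G [H [r [HC2 [HL Hux]]]]].
    pose proof (maximizer_Lop_pos n u c D M xm G H r Hn HM Hux Hxm Heq Hle HC2 Hc HD). lra.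
Qed.

Theorem proposition4p9 (n : nat) (hn : (2 <= n)%nat) (a : R)
    (ha : 0 <= a < sqrt 2) :
  unstable n (fun x => a < x n) /\
  exists ba, a < ba /\
    forall b, ba < b -> unstable n (fun x => a < x n < b).
Proof.
  set (c := (a + sqrt 2) / 2).
  assert (Hs2 : sqrt 2 * sqrt 2 = 2) by (apply sqrt_sqrt; lra).
  assert (Hc : a < c < sqrt 2) by (unfold c; lra).
  assert (Hc2 : c * c < 2) by nra.
  set (D := 8 / (2 - c * c) + 2).
  assert (HD : 8 < D * (2 - c * c)).
  { unfold D. rewrite Rmult_plus_distr_r. unfold Rdiv.
    rewrite Rmult_assoc, Rinv_l, Rmult_1_r by lra. lra. }
  assert (HcD : c < D) by (assert (0 < 8 / (2 - c * c)) by (apply Rdiv_lt_0_compat; lra);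
                           unfold D; nra).
  split.
  - apply (slab_unstable n c D); [exact hn|lra|exact HcD|exact HD|].
    intros x [_ Hx]. lra.
  - exists D. split; [lra|]. intros b Hb.
    apply (slab_unstable n c D); [exact hn|lra|exact HcD|exact HD|].
    intros x [_ Hx]. lra.
Qed.
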